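(* Consider an $N$-player episodic Markov game in which all agents run the BM-OFTRL algorithm with smooth value updates described in the context. For every $(h,t)\in[H]\times[T]$, \[ \delta_h^t \leq \sum_{j=1}^t \alpha_t^j\, \delta_{h+1}^j + \operatorname{SwapReg}_h^t. \]
   Context: Markov game: $N$ agents $\mathcal{N}=\{1,\dots,N\}$, horizon $H$, finite state space $\mathcal{S}$, finite action sets $\mathcal{A}_i$ ($A_i=|\mathcal A_i|$), joint action space $\mathcal{A}_{\mathrm{all}}=\prod_i\mathcal{A}_i$, rewards $r_{h,i}:\mathcal{S}\times\mathcal{A}_{\mathrm{all}}\to[0,1]$, transitions $P_h(\cdot\mid s,\bm a)$. For a (possibly correlated, non-Markov) policy $\pi$ acting from step $h$, $V^\pi_{h,i}(s)$ is the expected sum of agent $i$'s rewards from step $h$ to $H$ given $s_h=s$; all values at step $H+1$ are $0$. Notation: $[Q\pi_{h,-i}](s,a_i)=\sum_{\bm a_{-i}}Q(s,a_i,\bm a_{-i})\prod_{k\ne i}\pi_{h,k}(s,a_k)$, $[Q\pi_h](s)=\sum_{\bm a}Q(s,\bm a)\prod_k\pi_{h,k}(s,a_k)$, $P_h[V](s,\bm a)=\mathbb E_{s'\sim P_h(\cdot\mid s,\bm a)}V(s')$. Weights: $\alpha_t=\frac{H+1}{H+t}$, $\alpha_t^j=\alpha_j\prod_{j'=j+1}^t(1-\alpha_{j'})$ ($1\le j\le t$); at iteration $t$, $w_j=\alpha_t^j/\alpha_t^1$. Algorithm (agent $i$; all agents run it), learning rate $\eta>0$, log-barrier $\mathcal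 R(\bm x)=-\sum_a\log\bm x[a]$. Initialize $Q^0_{h,i}\equiv0$, $\pi^0_{h,i}(s,\cdot)$ uniform, $Q^t_{H+1,i}\equiv0$. For $t=1,\dots,T$: for all $s,h$, $a_i$: $\ell^{t,a_i}_{h,i}(s,a_i')=\sum_{j=1}^{t-1}w_j\pi^j_{h,i}(s,a_i)[Q^j_{h,i}\pi^j_{h,-i}](s,a_i')+w_t\pi^{t-1}_{h,i}(s,a_i)[Q^{t-1}_{h,i}\pi^{t-1}_{h,-i}](s,a_i')$, $q^{t,a_i}_{h,i}(s,\cdot)=\arg\max_{\bm x\in\Delta(\mathcal A_i)}\{\langle\bm x,\eta\ell^{t,a_i}_{h,i}(s,\cdot)/w_t\rangle-\mathcal R(\bm x)\}$, and $\pi^t_{h,i}(s,\cdot)$ is a distribution with $\pi^t_{h,i}(s,\cdot)=\sum_{a_i}\pi^t_{h,i}(s,a_i)q^{t,a_i}_{h,i}(s,\cdot)$. Then for $h=H,\dots,1$: $Q^t_{h,i}(s,\bm a)=(1-\alpha_t)Q^{t-1}_{h,i}(s,\bm a)+\alpha_t\big(r_{h,i}(s,\bm a)+P_h[\,[Q^t_{h+1,i}\pi^t_{h+1}]\,](s,\bm a)\big)$. Correlated policy $\bar\pi^t_h$ (acting from step $h$): for $h'=h,\dots,H$, sample $\tau\in[t]$ with $\mathbb P(\tau=j)=\alpha^j_t$ (shared randomness), all agents play the product policy $\pi^\tau_{h'}$ at step $h'$, set $t\leftarrow\tau$. Strategy modification for agent $i$ effective from step $h$: $\phi_i=\{\phi^s_{h',i}:\mathcal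 A_i\to\mathcal A_i\}_{h'\ge h,s}$; $\phi_i\diamond\pi$ replaces agent $i$'s recommended action $a_i$ at step $h'$, state $s$ by $\phi^s_{h',i}(a_i)$. Definitions: $\delta_h^t=\max_{i\in\mathcal N}\max_{\phi_i}\max_{s\in\mathcal S}\big(V^{\phi_i\diamond\bar\pi^t_h}_{h,i}(s)-V^{\bar\pi^t_h}_{h,i}(s)\big)$, with $\delta^t_{H+1}=0$; $\operatorname{SwapReg}^t_{h,i}(s)=\max_{\phi^s_{h,i}:\mathcal A_i\to\mathcal A_i}\sum_{j=1}^t\alpha^j_t\langle\phi^s_{h,i}\diamond\pi^j_{h,i}(s,\cdot)-\pi^j_{h,i}(s,\cdot),[Q^j_{h,i}\pi^j_{h,-i}](s,\cdot)\rangle$, where $\phi\diamond\bm x$ is the distribution of $\phi(a)$ for $a\sim\bm x$; $\operatorname{SwapReg}^t_h=\max_i\max_s\operatorname{SwapReg}^t_{h,i}(s)$. *)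

From HB Require Import structures.
From mathcomp Require Import all_boot all_order all_algebra.
From mathcomp Require Import reals exp.
Unset Printing Implicit Defensive.
Import Order.TTheory GRing.Theory Num.Theory.
Local Open Scope ring_scope.

(* Conventions: agents are 'I_N, agent i has action set (A i : finType),
   states form S : finType, steps h are natural numbers (meaningful range
   1..H, value at H+1 is 0), iterations t are natural numbers (0 = init).
   Types of the objects:
     r  : nat -> 'I_N -> S -> jact -> R                 r h i s a = r_{h,i}(s,a)
     P  : nat -> S -> jact -> S -> R                    P h s a s' = P_h(s'|s,a)
     pi : nat -> nat -> forall i, S -> A i -> R         pi t h i s a = pi^t_{h,i}(s,a)
     Q  : nat -> nat -> 'I_N -> S -> jact -> R          Q t h i s a = Q^t_{h,i}(s,a)
     q  : nat -> nat -> forall i, S -> A i -> A i -> R  q t h i s ai a' = q^{t,ai}_{h,i}(s,a') *)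

Section MarkovGame.
Context {R : realType}.

Definition alpha (H t : nat) : R := (H.+1)%:R / (H + t)%:R.
Definition alphaw (H t j : nat) : R :=
  alpha H j * \prod_(j.+1 <= j' < t.+1) (1 - alpha H j').
Definition wt (H t j : nat) : R := alphaw H t j / alphaw H t 1.

Context {N : nat} (A : 'I_N -> finType) (S : finType).

Definition jact := {dffun forall i : 'I_N, A i}.

Section Policies.
Variable pi : nat -> nat -> forall i : 'I_N, S -> A i -> R.

Definition prodpol (t h : nat) (s : S) (a : jact) : R :=
  \prod_(k < N) pi t h k s (a k).
Definition prodpol_mi (t h : nat) (i : 'I_N) (s : S) (a : jact) : R :=
  \prod_(k < N | k != i) pi t h k s (a k).

Variable Q : nat -> nat -> 'I_N -> S -> jact -> R.

(* [Q^t_{h,i} pi^t_{h,-i}](s, ai) : sum over a_{-i}, i.e. over joint actions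
   whose i-th component is ai *)
Definition Qmi (t h : nat) (i : 'I_N) (s : S) (ai : A i) : R :=
  \sum_(a : jact | a i == ai) Q t h i s a * prodpol_mi t h i s a.
Definition Qall (t h : nat) (i : 'I_N) (s : S) : R :=
  \sum_(a : jact) Q t h i s a * prodpol t h s a.

Definition loss (H t h : nat) (i : 'I_N) (s : S) (ai a' : A i) : R :=
  \sum_(1 <= j < t) wt H t j * pi j h i s ai * Qmi j h i s a'
  + wt H t t * pi t.-1 h i s ai * Qmi t.-1 h i s a'.

(* FTRL objective  <x, eta * l / w_t> - R(x),  R(x) = - sum_a log x[a]
   (only evaluated on the interior of the simplex, where it is finite) *)
Definition ftrl_obj (H : nat) (eta : R) (t h : nat) (i : 'I_N) (s : S)
    (ai : A i) (x : A i -> R) : R :=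
  \sum_(a : A i) x a * (eta * loss H t h i s ai a / wt H t t)
  + \sum_(a : A i) ln (x a).

Variables (r : nat -> 'I_N -> S -> jact -> R) (P : nat -> S -> jact -> S -> R).

Record bm_oftrl_run (H T : nat) (eta : R)
    (q : nat -> nat -> forall i : 'I_N, S -> A i -> A i -> R) : Prop := {
  run_Q0 : forall h i s a, Q 0 h i s a = 0;
  run_pi0 : forall h i s (a : A i), pi 0 h i s a = (#|A i|%:R)^-1;
  run_QH1 : forall t i s a, Q t H.+1 i s a = 0;
  (* q^{t,ai}_{h,i}(s,.) = argmax_{x in simplex} <x, eta l / w_t> - R(x);
     since -R = -oo on the boundary, the argmax lies in the open simplex *)
  run_q : forall t, (1 <= t <= T)%N -> forall h, (1 <= h <= H)%N ->
    forall i s (ai : A i),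
      [/\ (forall a', 0 < q t h i s ai a'),
          \sum_(a' : A i) q t h i s ai a' = 1 &
          forall x : A i -> R, (forall a', 0 < x a') -> \sum_(a' : A i) x a' = 1 ->
            ftrl_obj H eta t h i s ai x <= ftrl_obj H eta t h i s ai (q t h i s ai)];
  run_pi : forall t, (1 <= t <= T)%N -> forall h, (1 <= h <= H)%N ->
    forall i s,
      [/\ (forall a, 0 <= pi t h i s a),
          \sum_(a : A i) pi t h i s a = 1 &
          forall a', pi t h i s a' = \sum_(ai : A i) pi t h i s ai * q t h i s ai a'];
  run_Q : forall t, (1 <= t <= T)%N -> forall h, (1 <= h <= H)%N ->
    forall i s a,
      Q t h i s a = (1 - alpha H t) * Q t.-1 h i s a
        + alpha H t * (r h i s a + \sum_(s' : S) P h s a s' * Qall t h.+1 i s')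
}.

(* Value (for agent i, from step h with remaining horizon k) of the correlated
   policy bar-pi^t_h in which the recommended joint action a is transformed
   into (act h s a) before being executed.  Unfolding the sampling process:
   sample j in [t] w.p. alpha_t^j, play a ~ prod_k pi^j_{h,k}(s,.), continue
   from step h+1 with index j. *)
Fixpoint cval (H : nat) (act : nat -> S -> jact -> jact) (i : 'I_N)
    (k h t : nat) (s : S) {struct k} : R :=
  match k with
  | 0 => 0
  | k'.+1 =>
    \sum_(1 <= j < t.+1) alphaw H t j *
      \sum_(a : jact) prodpol j h s a *
        (r h i s (act h s a) +
         \sum_(s' : S) P h s (act h s a) s' * cval H act i k' h.+1 j s')
  end.

Definition Vcor (H : nat) (i : 'I_N) (h t : nat) (s : S) : R :=
  cval H (fun _ _ a => a) i (H.+1 - h) h t s.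

(* strategy modifications for agent i: phi^s_{h',i} : A i -> A i for steps
   h' in 0..H (steps below the starting step are irrelevant) *)
Definition smod (H : nat) (i : 'I_N) :=
  {ffun 'I_H.+1 -> {ffun S -> {ffun A i -> A i}}}.

Definition smod_fun (H : nat) (i : 'I_N) (phi : smod H i) : nat -> S -> A i -> A i :=
  fun h s a => if (h < H.+1)%N then phi (inord h) s a else a.

Definition modify (i : 'I_N) (phi : nat -> S -> A i -> A i) :
    nat -> S -> jact -> jact :=
  fun h s a => finfun (dfwith (fun k => a k) (phi h s (a i))).

Definition Vmod (H : nat) (i : 'I_N) (phi : smod H i) (h t : nat) (s : S) : R :=
  cval H (modify i (smod_fun H i phi)) i (H.+1 - h) h t s.

(* delta_h^t = max_i max_phi max_s (V^{phi <> bar-pi} - V^{bar-pi}).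
   Folding Num.max from 0 is harmless: the identity modification gives 0. *)
Definition delta (H h t : nat) : R :=
  \big[Num.max/0]_(i < N) \big[Num.max/0]_(phi : smod H i)
    \big[Num.max/0]_(s : S) (Vmod H i phi h t s - Vcor H i h t s).

Definition pushf (B : finType) (phi : B -> B) (x : B -> R) (b : B) : R :=
  \sum_(a : B | phi a == b) x a.

(* SwapReg^t_{h,i}(s); again the identity map gives 0 *)
Definition swapreg_i (H h t : nat) (i : 'I_N) (s : S) : R :=
  \big[Num.max/0]_(phi : {ffun A i -> A i})
    \sum_(1 <= j < t.+1) alphaw H t j *
      \sum_(a : A i) (pushf (A i) phi (pi j h i s) a - pi j h i s a) * Qmi j h i s a.

Definition swapreg (H h t : nat) : R :=
  \big[Num.max/0]_(i < N) \big[Num.max/0]_(s : S) swapreg_i H h t i s.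

End Policies.
End MarkovGame.

(* Unrolling the smooth value update gives
   Q^t_h = \sum_j alpha_t^j (r_h + P_h [Q^j_{h+1} pi^j_{h+1}]); since the weights
   alpha_t^j sum to 1, backward induction on h yields
   V^{bar pi^t}_h(s) = \sum_j alpha_t^j [Q^j_h pi^j_h](s) and
   Q^t_h = r_h + P_h V^{bar pi^t}_{h+1}.  A modification phi_i followed from step
   h+1 loses at most delta^j_{h+1} in the branch where bar pi^t samples j, so
   V^{phi_i <> bar pi^t}_h(s) is at most the alpha_t-average of [Q^j_h pi^j_h](s)
   with agent i's recommendation replaced by phi^s_{h,i}, plus delta^j_{h+1}.
   Subtracting V^{bar pi^t}_h(s) leaves exactly the swap-regret term of phi^s_{h,i}. *)

From HB Require Import structures.
From mathcomp Require Import all_boot all_order all_algebra.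
From mathcomp Require Import reals exp.
From mathcomp Require Import zify.
Import Order.TTheory GRing.Theory Num.Theory.
Local Open Scope ring_scope.

Section Weights.
Context {R : realType} (H : nat).
Local Notation alpha := (alpha (R:=R) H).
Local Notation alphaw := (alphaw (R:=R) H).

Lemma alpha_ge0 t : 0 <= alpha t.
Proof. by rewrite /alpha divr_ge0. Qed.

Lemma alpha_le1 t : (1 <= t)%N -> alpha t <= 1.
Proof. by move=> t1; rewrite /alpha ler_pdivrMr ?mul1r ?ler_nat ?ltr0n //; lia. Qed.

Lemma alpha1 : alpha 1 = 1.
Proof. by rewrite /alpha addn1 divff ?pnatr_eq0. Qed.

Lemma alphaw_ge0 t j : (1 <= j)%N -> 0 <= alphaw t j.
Proof.
move=> j1; rewrite /alphaw mulr_ge0 ?alpha_ge0 // big_nat prodr_ge0 // => k /andP[jk _].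
by rewrite subr_ge0 alpha_le1 //; lia.
Qed.

Lemma alphawS t j : (j <= t)%N -> alphaw t.+1 j = alphaw t j * (1 - alpha t.+1).
Proof. by move=> jt; rewrite /alphaw big_nat_recr //= mulrA. Qed.

Lemma alphaw_last t : alphaw t t = alpha t.
Proof. by rewrite /alphaw big_geq // mulr1. Qed.

Lemma sum_alphaw t : (1 <= t)%N -> \sum_(1 <= j < t.+1) alphaw t j = 1.
Proof.
elim: t => // t IH _; have [->|t_gt0] := posnP t.
  by rewrite big_nat1 alphaw_last alpha1.
rewrite big_nat_recr //= alphaw_last.
under eq_big_nat => j /andP[_ jt] do rewrite alphawS //.
by rewrite -big_distrl /= IH // mul1r subrK.
Qed.

End Weights.

Section DependentProfiles.
Context {I : finType} {T_ : I -> finType}.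
Implicit Types (a : {dffun forall i, T_ i}).

Definition dfupd a i (d : T_ i) : {dffun forall i, T_ i} :=
  finfun (dfwith (fun k => a k) d).

Lemma dfupd_eq a i d : dfupd a i d i = d.
Proof. by rewrite ffunE dfwith_in. Qed.

Lemma dfupd_neq a i d k : k != i -> dfupd a i d k = a k.
Proof. by move=> ki; rewrite ffunE dfwith_out // eq_sym. Qed.

Lemma dfupd_dfupd a i d d' : dfupd (dfupd a i d) i d' = dfupd a i d'.
Proof.
apply/ffunP => k; have [->|ki] := eqVneq k i; first by rewrite !dfupd_eq.
by rewrite !dfupd_neq.
Qed.

Lemma dfupd_id a i : dfupd a i (a i) = a.
Proof.
apply/ffunP => k; have [->|ki] := eqVneq k i; first by rewrite dfupd_eq.
by rewrite dfupd_neq.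
Qed.

Lemma eq_dfupd_self a i c : (dfupd a i c == a) = (a i == c).
Proof.
have [<-|ac] := eqVneq (a i) c; first by rewrite dfupd_id eqxx.
by apply/eqP => E; move: ac; rewrite -E dfupd_eq eqxx.
Qed.

Lemma reindex_dfupd {V : nmodType} i (G : {dffun forall i, T_ i} -> V) (c d : T_ i) :
  \sum_(a : {dffun forall i, T_ i} | a i == c) G (dfupd a i d) =
  \sum_(a : {dffun forall i, T_ i} | a i == d) G a.
Proof.
rewrite [RHS](reindex_onto (fun a => dfupd a i d) (fun a => dfupd a i c)); last first.
  by move=> a /eqP ad; rewrite dfupd_dfupd -ad dfupd_id.
by apply: eq_bigl => a; rewrite dfupd_eq eqxx dfupd_dfupd eq_dfupd_self.
Qed.

Lemma sum_prod_dffun {R : comPzSemiRingType} (f : forall i, T_ i -> R) :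
  \sum_(a : {dffun forall i, T_ i}) \prod_i f i (a i) = \prod_i \sum_(x : T_ i) f i x.
Proof.
pose g (j : {i : I & T_ i}) := f (tag j) (tagged j).
have sum_tagged i : \sum_(x : T_ i) f i x = \sum_(j | tagged_with T_ i j) g j.
  rewrite (eq_bigl (fun j => (tag j == i) && true)) => [|j]; last by rewrite andbT.
  by rewrite -(sig_big_dep (pred1 i) (fun _ _ => true) f) /= big_pred1_eq.
under [RHS]eq_bigr do rewrite sum_tagged.
rewrite bigA_distr_big_dep [RHS]big_sub.
rewrite [RHS](reindex (@to_family_tagged_with _ T_)); last first.
  exact/onW_bij/to_family_tagged_with_bij.
rewrite [RHS](reindex (@fprod_of_dffun _ T_)); last first.
  exact/onW_bij/fprod_of_dffun_bij.
by apply: eq_bigr => a _; apply: eq_bigr => i _; rewrite /g /= ffunE.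
Qed.

End DependentProfiles.

Lemma sum_pushf {R : realType} (B : finType) (phi : B -> B) (x G : B -> R) :
  \sum_b pushf B phi x b * G b = \sum_c x c * G (phi c).
Proof.
rewrite [RHS](partition_big phi predT) //=; apply: eq_bigr => b _.
by rewrite /pushf big_distrl; apply: eq_bigr => c /eqP ->.
Qed.

Section Policies.
Context {R : realType} {N : nat} (A : 'I_N -> finType) (S : finType).
Variable pi : nat -> nat -> forall i : 'I_N, S -> A i -> R.
Variable Q : nat -> nat -> 'I_N -> S -> jact A -> R.
Local Notation prodpol := (prodpol A S pi).
Local Notation Qmi := (Qmi A S pi Q).

Lemma prodpolE i j h s a :
  prodpol j h s a = pi j h i s (a i) * prodpol_mi A S pi j h i s a.
Proof. by rewrite /prodpol (bigD1 i). Qed.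

Lemma sum_prodpol_dfupd i j h s (phi : A i -> A i) :
  \sum_(a : jact A) prodpol j h s a * Q j h i s (dfupd a i (phi (a i))) =
  \sum_(c : A i) pi j h i s c * Qmi j h i s (phi c).
Proof.
rewrite (partition_big (fun a : jact A => a i) predT) //=; apply: eq_bigr => c _.
rewrite /Qmi -(reindex_dfupd _ _ c (phi c)) big_distrr; apply: eq_bigr => a /eqP ac.
have prodpol_mi_dfupd : prodpol_mi A S pi j h i s (dfupd a i (phi c)) =
    prodpol_mi A S pi j h i s a by apply: eq_bigr => k ki; rewrite dfupd_neq.
by rewrite (prodpolE i) ac prodpol_mi_dfupd /= -mulrA [_ * Q _ _ _ _ _]mulrC.
Qed.

Lemma Qall_Qmi i j h s :
  Qall A S pi Q j h i s = \sum_(c : A i) pi j h i s c * Qmi j h i s c.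
Proof.
rewrite -(sum_prodpol_dfupd i j h s id); apply: eq_bigr => a _.
by rewrite dfupd_id mulrC.
Qed.

Lemma sum_prodpol j h s : (forall k, \sum_x pi j h k s x = 1) ->
  \sum_(a : jact A) prodpol j h s a = 1.
Proof. by move=> pi1; rewrite /prodpol (sum_prod_dffun (fun k => pi j h k s)) big1. Qed.

End Policies.

Section Values.
Context {R : realType} {N : nat} (A : 'I_N -> finType) (S : finType) (H : nat).
Variables (r : nat -> 'I_N -> S -> jact A -> R) (P : nat -> S -> jact A -> S -> R)
  (pi : nat -> nat -> forall i : 'I_N, S -> A i -> R)
  (Q : nat -> nat -> 'I_N -> S -> jact A -> R).
Local Notation cval := (cval A S pi r P H).
Local Notation prodpol := (prodpol A S pi).
Local Notation Qmi := (Qmi A S pi Q).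
Local Notation Vcor := (Vcor A S pi r P H).
Local Notation Vmod := (Vmod A S pi r P H).
Local Notation delta := (delta A S pi r P H).

Lemma cvalE act i h t s : (h <= H)%N ->
  cval act i (H.+1 - h) h t s = \sum_(1 <= j < t.+1) alphaw H t j *
    \sum_(a : jact A) prodpol j h s a * (r h i s (act h s a) +
      \sum_(s' : S) P h s (act h s a) s' * cval act i (H.+1 - h.+1) h.+1 j s').
Proof. by move=> hH; rewrite subSn. Qed.

Lemma modifyE i phi h s a : modify A S i phi h s a = dfupd a i (phi h s (a i)).
Proof. by []. Qed.

Lemma smod_funE i (phi : smod A S H i) h s : (h <= H)%N ->
  smod_fun A S H i phi h s =1 phi (inord h) s.
Proof. by move=> hH x; rewrite /smod_fun ltnS hH. Qed.

Lemma Vmod_sub_Vcor_le_delta i phi h t s : Vmod i phi h t s - Vcor i h t s <= delta h t.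
Proof.
apply: le_trans (le_bigmax _ _ i); apply: le_trans (le_bigmax _ _ phi).
exact: le_bigmax.
Qed.

Lemma swapreg_ge h t i s (phi : {ffun A i -> A i}) :
  \sum_(1 <= j < t.+1) alphaw H t j * (\sum_(c : A i) pi j h i s c * Qmi j h i s (phi c)
     - \sum_(c : A i) pi j h i s c * Qmi j h i s c) <= swapreg A S pi Q H h t.
Proof.
apply: le_trans (le_bigmax _ _ i); apply: le_trans (le_bigmax _ _ s).
apply: le_trans (le_bigmax _ _ phi).
by under [X in _ <= X]eq_bigr do rewrite (eq_bigr _ (fun a _ => mulrBl _ _ _)) sumrB sum_pushf.
Qed.

End Values.

#[local] Arguments run_Q0 {R N A S pi Q r P H T eta q} _.
#[local] Arguments run_QH1 {R N A S pi Q r P H T eta q} _.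
#[local] Arguments run_pi {R N A S pi Q r P H T eta q} _.
#[local] Arguments run_Q {R N A S pi Q r P H T eta q} _.

Section Run.
Context {R : realType} {N : nat} (A : 'I_N -> finType) (S : finType).
Variables (H T : nat) (eta : R)
  (r : nat -> 'I_N -> S -> jact A -> R) (P : nat -> S -> jact A -> S -> R)
  (pi : nat -> nat -> forall i : 'I_N, S -> A i -> R)
  (q : nat -> nat -> forall i : 'I_N, S -> A i -> A i -> R)
  (Q : nat -> nat -> 'I_N -> S -> jact A -> R).
Hypothesis run : bm_oftrl_run A S pi Q r P H T eta q.
Local Notation Qall := (Qall A S pi Q).
Local Notation Vcor := (Vcor A S pi r P H).

Lemma Q_smoothE t h i s a : (t <= T)%N -> (1 <= h <= H)%N ->
  Q t h i s a = \sum_(1 <= k < t.+1) alphaw H t k *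
    (r h i s a + \sum_(s' : S) P h s a s' * Qall k h.+1 i s').
Proof.
move=> + hH; elim: t => [|t IH] tT; first by rewrite big_geq // (run_Q0 run).
rewrite (run_Q run) /=; [|lia|done].
rewrite IH; last by lia.
rewrite [RHS]big_nat_recr //= alphaw_last big_distrr; congr (_ + _).
by apply: eq_big_nat => k /andP[_ kt]; rewrite alphawS //= mulrCA mulrA.
Qed.

Lemma Q_Vcor_step h : (1 <= h <= H)%N ->
  (forall k i s', (1 <= k <= T)%N ->
     Vcor i h.+1 k s' = \sum_(1 <= m < k.+1) alphaw H k m * Qall m h.+1 i s') ->
  forall k i s a, (1 <= k <= T)%N ->
  Q k h i s a = r h i s a + \sum_(s' : S) P h s a s' * Vcor i h.+1 k s'.
Proof.
move=> hH Vcor_h1 k i s a kT; rewrite Q_smoothE //; last by lia.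
under [X in _ = _ + X]eq_bigr do rewrite Vcor_h1 // big_distrr.
rewrite (eq_bigr _ (fun m _ => mulrDr _ _ _)) big_split /= -big_distrl /=.
rewrite sum_alphaw ?mul1r; last by lia.
congr (_ + _); rewrite exchange_big /=; apply: eq_big_nat => m _.
by rewrite big_distrr; apply: eq_bigr => s' _; rewrite mulrCA.
Qed.

Lemma Vcor_Qall h j i s : (1 <= h <= H.+1)%N -> (1 <= j <= T)%N ->
  Vcor i h j s = \sum_(1 <= k < j.+1) alphaw H j k * Qall k h i s.
Proof.
move Hn : (H.+1 - h)%N => n; elim: n h Hn j i s => [|n IH] h Hn j i s hH jT.
  have -> : h = H.+1 by lia.
  rewrite /Vcor subnn big1_seq // => k _; rewrite /Qall big1 ?mulr0 // => a _.
  by rewrite (run_QH1 run) mul0r.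
have {}hH : (1 <= h <= H)%N by lia.
rewrite /Vcor cvalE; last by lia.
apply: eq_big_nat => k kj; congr (_ * _); apply: eq_bigr => a _.
rewrite [RHS]mulrC (Q_Vcor_step _ hH) //; last by lia.
by move=> k' i' s' k'T; apply: IH => //; lia.
Qed.

Lemma Q_Vcor k h i s a : (1 <= k <= T)%N -> (1 <= h <= H)%N ->
  Q k h i s a = r h i s a + \sum_(s' : S) P h s a s' * Vcor i h.+1 k s'.
Proof.
move=> kT hH; apply: Q_Vcor_step => // k' i' s' k'T.
by apply: Vcor_Qall => //; lia.
Qed.

Hypothesis P_distr : forall h, (1 <= h <= H)%N -> forall s a,
  (forall s', 0 <= P h s a s') /\ \sum_(s' : S) P h s a s' = 1.
Local Notation Vmod := (Vmod A S pi r P H).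
Local Notation delta := (delta A S pi r P H).
Local Notation Qmi := (Qmi A S pi Q).

Lemma Vmod_step_le i phi h j s b : (1 <= h <= H)%N -> (1 <= j <= T)%N ->
  r h i s b + \sum_(s' : S) P h s b s' * Vmod i phi h.+1 j s' <= Q j h i s b + delta h.+1 j.
Proof.
move=> hH jT; rewrite Q_Vcor // -addrA lerD2l.
have [P_ge0 P_sum1] := P_distr h hH s b.
rewrite -[delta _ _]mul1r -P_sum1 big_distrl -big_split /=.
apply: ler_sum => s' _; rewrite -mulrDr ler_wpM2l // -lerBlDl.
exact: Vmod_sub_Vcor_le_delta.
Qed.

Lemma Vmod_le i phi h t s : (1 <= h <= H)%N -> (1 <= t <= T)%N ->
  Vmod i phi h t s <= \sum_(1 <= j < t.+1) alphaw H t j *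
    (\sum_(c : A i) pi j h i s c * Qmi j h i s (phi (inord h) s c) + delta h.+1 j).
Proof.
move=> hH tT; rewrite /Vmod cvalE; last by lia.
apply: ler_sum_nat => j /andP[j1 jt]; have jT : (1 <= j <= T)%N by lia.
have pi_distr k := run_pi run j jT h hH k s.
apply: ler_wpM2l; first exact: alphaw_ge0.
rewrite -sum_prodpol_dfupd -[delta _ _]mul1r.
rewrite -(@sum_prodpol _ _ _ _ pi j h s) => [|k]; last by case: (pi_distr k).
rewrite big_distrl -big_split /=; apply: ler_sum => a _.
rewrite -mulrDr; apply: ler_wpM2l.
  by apply: prodr_ge0 => k _; case: (pi_distr k).
by rewrite modifyE smod_funE ?Vmod_step_le //; lia.
Qed.

Lemma Vmod_sub_Vcor_le i phi h t s : (1 <= h <= H)%N -> (1 <= t <= T)%N ->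
  Vmod i phi h t s - Vcor i h t s <=
    \sum_(1 <= j < t.+1) alphaw H t j * delta h.+1 j + swapreg A S pi Q H h t.
Proof.
move=> hH tT; rewrite Vcor_Qall //; last by lia.
apply: le_trans (lerB (Vmod_le i phi h t s hH tT) (lexx _)) _.
rewrite -sumrB; under eq_bigr do rewrite Qall_Qmi -mulrBr addrAC mulrDr.
rewrite big_split /= addrC lerD2l; exact: swapreg_ge.
Qed.

Lemma delta_le h t : (1 <= h <= H)%N -> (1 <= t <= T)%N ->
  delta h t <= \sum_(1 <= j < t.+1) alphaw H t j * delta h.+1 j + swapreg A S pi Q H h t.
Proof.
move=> hH tT.
have rhs_ge0 : 0 <= \sum_(1 <= j < t.+1) alphaw H t j * delta h.+1 j + swapreg A S pi Q H h t.
  rewrite addr_ge0 ?bigmax_ge_id // big_nat sumr_ge0 // => j /andP[j1 _].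
  by rewrite mulr_ge0 ?alphaw_ge0 ?bigmax_ge_id.
apply: bigmax_le => // i _; apply: bigmax_le => // phi _.
by apply: bigmax_le => // s _; apply: Vmod_sub_Vcor_le.
Qed.

End Run.

Theorem lemma1 (R : realType) (N : nat) (A : 'I_N -> finType) (S : finType)
    (H T : nat) (eta : R)
    (r : nat -> 'I_N -> S -> jact A -> R)
    (P : nat -> S -> jact A -> S -> R)
    (pi : nat -> nat -> forall i : 'I_N, S -> A i -> R)
    (q : nat -> nat -> forall i : 'I_N, S -> A i -> A i -> R)
    (Q : nat -> nat -> 'I_N -> S -> jact A -> R) :
  (forall i : 'I_N, (0 < #|A i|)%N) ->
  (forall h, (1 <= h <= H)%N -> forall i s a, 0 <= r h i s a <= 1) ->
  (forall h, (1 <= h <= H)%N -> forall s a,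
      (forall s', 0 <= P h s a s') /\ \sum_(s' : S) P h s a s' = 1) ->
  0 < eta ->
  bm_oftrl_run A S pi Q r P H T eta q ->
  forall h t, (1 <= h <= H)%N -> (1 <= t <= T)%N ->
    delta A S pi r P H h t <=
      \sum_(1 <= j < t.+1) alphaw H t j * delta A S pi r P H h.+1 j
      + swapreg A S pi Q H h t.
Proof.
move=> _ _ P_distr _ run.
exact: (@delta_le R N A S H T eta r P pi q Q run P_distr).
Qed.
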